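(* Let $\mathcal{N}$ be a real affine space and let $D$ be a convex subset of $\mathbb{R}\times\mathcal{N}$. Let $\mathcal{B}:D\to\mathbb{R}$ be continuous on every finite-dimensional affine subset of $D$, and let $c$ be a function on $D$. Suppose that whenever $(\mathbf{f},N),(\mathbf{f}_\pm,N_\pm)\in D$ satisfy $\mathbf{f}=(\mathbf{f}_++\mathbf{f}_-)/2$ and $N=(N_++N_-)/2$, we have $$\frac{\mathcal{B}(\mathbf{f}_+,N_+)+\mathcal{B}(\mathbf{f}_-,N_-)}{2}-\mathcal{B}(\mathbf{f},N)\ge c(\mathbf{f},N)\,|\mathbf{f}_+-\mathbf{f}|^2\ge0 .$$ Then for all $(\mathbf{f}_k,N_k)\in D$ and $\gamma_k\ge0$, $k=1,\dots,n$, with $\sum_{k=1}^n\gamma_k=1$, setting $\mathbf{f}=\sum_k\gamma_k\mathbf{f}_k$ and $N=\sum_k\gamma_kN_k$, we have $$-\mathcal{B}(\mathbf{f},N)+\sum_{k=1}^n\gamma_k\,\mathcal{B}(\mathbf{f}_k,N_k)\ge\frac14\,c(\mathbf{f},N)\Big(\sum_{k=1}^n\gamma_k|\mathbf{f}_k-\mathbf{f}|\Big)^2 .$$ *)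

From HB Require Import structures.
From mathcomp Require Import all_boot all_order all_algebra.
From mathcomp Require Import all_classical all_reals all_analysis.
Set Implicit Arguments. Unset Strict Implicit. Unset Printing Implicit Defensive.
Import Order.TTheory GRing.Theory Num.Theory.
Import numFieldNormedType.Exports.
Local Open Scope ring_scope.
Local Open Scope classical_set_scope.

(* The real affine space N is modelled as a real vector space V (choice of an
   origin); affine combinations are then linear combinations with weights
   summing to 1. *)

Definition convex_RV (R : realType) (V : lmodType R) (D : set (R * V)) : Prop :=
  forall x y, D x -> D y -> forall t : R, 0 <= t <= 1 ->
    D (t * x.1 + (1 - t) * y.1, t *: x.2 + (1 - t) *: y.2).

Definition acomb (R : realType) (V : lmodType R) (m : nat)
  (p : 'I_m -> R * V) (t : 'rV[R]_m) : R * V :=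
  (\sum_(i < m) t 0 i * (p i).1, \sum_(i < m) t 0 i *: (p i).2).

(* B is continuous on every finite-dimensional affine subset of D, i.e. on
   D ∩ L for every affine subspace L spanned by finitely many points p_i;
   L is parametrized by affine coordinates t (sum t_i = 1) with its
   canonical (Euclidean) topology. *)
Definition fd_affine_continuous (R : realType) (V : lmodType R)
  (D : set (R * V)) (B : R -> V -> R) : Prop :=
  forall (m : nat) (p : 'I_m -> R * V),
    {within [set t : 'rV[R]_m | \sum_(i < m) t 0 i = 1 /\ D (acomb p t)],
      continuous (fun t => B (acomb p t).1 (acomb p t).2)}.

From HB Require Import structures.
From mathcomp Require Import all_boot all_order all_algebra.
From mathcomp Require Import all_classical all_reals all_analysis.
From mathcomp Require Import ring lra.
Import Order.TTheory GRing.Theory Num.Theory.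
Import numFieldNormedType.Exports.
Local Open Scope ring_scope.
Local Open Scope classical_set_scope.
Set Implicit Arguments. Unset Strict Implicit. Unset Printing Implicit Defensive.

(* Midpoint convexity together with continuity along segments makes B convex
   along segments (at a maximum point of the defect on [0, 1] the midpoint
   inequality would fail), so Jensen's inequality holds for B.  Let alpha be
   the total weight of the points with f_k >= f and put
   sigma_k = [f_k >= f] - alpha.  The weights gamma_k (1 +- sigma_k) are again
   probability weights; by Jensen the two barycenters P_+- they define satisfy
   (B(P_+) + B(P_-)) / 2 <= sum_k gamma_k B(f_k, N_k).  Their midpoint is
   (f, N) and the first coordinate of P_+ is f + (sum_k gamma_k |f_k - f|) / 2,
   so the hypothesis applied at (f, N) and P_+- gives the claim. *)

Lemma within_continuous_comp_within {U W Z : topologicalType}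
    (A : set U) (S : set W) (h : U -> W) (g : W -> Z) :
  (forall x, A x -> S (h x)) ->
  {within A, continuous h} -> {within S, continuous g} ->
  {within A, continuous (g \o h)}.
Proof.
move=> AS /subspace_continuousP ch /subspace_continuousP cg.
apply/subspace_continuousP => x Ax.
have hS : h @ within A (nbhs x) --> within S (nbhs (h x)).
  move=> Q; rewrite !nbhs_simpl /= => nQ.
  have := ch x Ax _ nQ; rewrite /= !nbhs_simpl /within.
  by apply: (@filterS _ (nbhs x)) => z Hz Az; apply: Hz => //; exact: AS.
exact: (cvg_comp _ _ hS (cg _ (AS _ Ax))).
Qed.

Lemma midpoint_convex_le0 (R : realType) (phi : R -> R) :
  {within `[0, 1], continuous phi} -> phi 0 = 0 -> phi 1 = 0 ->
  (forall s u, 0 <= s <= 1 -> 0 <= u <= 1 ->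
     phi ((s + u) / 2) <= (phi s + phi u) / 2) ->
  forall t, 0 <= t <= 1 -> phi t <= 0.
Proof.
move=> cphi phi0 phi1 phi_mid t t01.
have [c] := EVT_max ler01 cphi; rewrite in_itv /= => /andP[c0 c1] cmax.
have le_phic s : 0 <= s <= 1 -> phi s <= phi c.
  by move=> s01; apply: cmax; rewrite in_itv.
apply: le_trans (le_phic t t01) _.
(* [c] is the midpoint of [0] and [2c], or of [2c - 1] and [1]. *)
have [c_le|c_gt] := leP c 2^-1.
- have := phi_mid 0 (2 * c); rewrite phi0.
  have -> : (0 + 2 * c) / 2 = c by field.
  have := le_phic (2 * c); lra.
- have := phi_mid (2 * c - 1) 1; rewrite phi1.
  have -> : (2 * c - 1 + 1) / 2 = c by field.
  have := le_phic (2 * c - 1); lra.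
Qed.

Section ConvexCombinations.
Variables (R : realType) (W : lmodType R) (D : set W) (F : W -> R).

Hypothesis D_convex : forall x y t, D x -> D y -> 0 <= t <= 1 ->
  D (t *: x + (1 - t) *: y).
Hypothesis F_segment_continuous : forall x y, D x -> D y ->
  {within `[0, 1], continuous (fun t => F (t *: x + (1 - t) *: y))}.
Hypothesis F_midpoint_convex : forall x y, D x -> D y ->
  F (2^-1 *: (x + y)) <= (F x + F y) / 2.

Lemma convex_midpoint (x y : W) : D x -> D y -> D (2^-1 *: (x + y)).
Proof.
move=> Dx Dy; have half01 : 0 <= (2^-1 : R) <= 1 by apply/andP; split; lra.
have -> : 2^-1 *: (x + y) = 2^-1 *: x + (1 - 2^-1) *: y.
  by rewrite scalerDr; congr (_ + _ *: _); field.
exact: D_convex.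
Qed.

Lemma segment_midpoint (s u : R) (x y : W) :
  2^-1 *: ((s *: x + (1 - s) *: y) + (u *: x + (1 - u) *: y)) =
  ((s + u) / 2) *: x + (1 - (s + u) / 2) *: y.
Proof.
rewrite addrACA -!scalerDl scalerDr !scalerA.
by congr (_ *: _ + _ *: _); field.
Qed.

Lemma segment_convex (x y : W) (t : R) : D x -> D y -> 0 <= t <= 1 ->
  F (t *: x + (1 - t) *: y) <= t * F x + (1 - t) * F y.
Proof.
move=> Dx Dy t01; rewrite -subr_le0.
pose phi s := F (s *: x + (1 - s) *: y) - (s * F x + (1 - s) * F y).
apply: (@midpoint_convex_le0 _ phi) t t01.
- apply: within_continuousB; first exact: F_segment_continuous.
  apply: continuous_subspaceT => s.
  apply: cvgD; apply: cvgMl; first exact: cvg_id.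
  exact: (cvgB (cvg_cst _) cvg_id).
- by rewrite /phi scale0r add0r subr0 scale1r; ring.
- by rewrite /phi scale1r subrr scale0r addr0; ring.
- move=> s u s01 u01.
  have := F_midpoint_convex (D_convex Dx Dy s01) (D_convex Dx Dy u01).
  rewrite segment_midpoint /phi; lra.
Qed.

Lemma jensen n (p : 'I_n -> W) (g : 'I_n -> R) :
  (forall k, D (p k)) -> (forall k, 0 <= g k) -> \sum_(k < n) g k = 1 ->
  D (\sum_(k < n) g k *: p k) /\
  F (\sum_(k < n) g k *: p k) <= \sum_(k < n) g k * F (p k).
Proof.
elim: n p g => [|n IHn] p g Dp g_ge0.
  by rewrite big_ord0 => /eqP; rewrite eq_sym oner_eq0.
rewrite !big_ord_recr /=; set s := \sum_(i < n) _ => g_sum.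
pose q i := p (widen_ord (leqnSn n) i).
have s_ge0 : 0 <= s by exact: sumr_ge0.
have -> : g ord_max = 1 - s by lra.
have [s0|s_neq0] := eqVneq s 0.
  have g0 i : g (widen_ord (leqnSn n) i) = 0 by move/psumr_eq0P: s0 => ->.
  rewrite !big1 => [| i _ | i _]; rewrite ?g0 ?mul0r ?scale0r //.
  by rewrite s0 subr0 !add0r scale1r mul1r.
pose h i := g (widen_ord (leqnSn n) i) / s.
have [Dq Fq] : D (\sum_i h i *: q i) /\
    F (\sum_i h i *: q i) <= \sum_i h i * F (q i).
  apply: IHn => [j | j |].
  - exact: Dp.
  - by rewrite /h divr_ge0.
  - by rewrite -mulr_suml divff.
have -> : \sum_i g (widen_ord (leqnSn n) i) *: p (widen_ord (leqnSn n) i) =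
    s *: \sum_i h i *: q i.
  rewrite scaler_sumr; apply: eq_bigr => i _; rewrite scalerA.
  by congr (_ *: _); rewrite /h mulrC divfK.
have -> : \sum_i g (widen_ord (leqnSn n) i) * F (p (widen_ord (leqnSn n) i)) =
    s * \sum_i h i * F (q i).
  rewrite mulr_sumr; apply: eq_bigr => i _; rewrite mulrA.
  by congr (_ * _); rewrite /h mulrC divfK.
have s01 : 0 <= s <= 1 by rewrite s_ge0 /=; have := g_ge0 ord_max; lra.
split; first exact: D_convex.
apply: le_trans (segment_convex Dq (Dp _) s01) _.
by rewrite lerD2r ler_wpM2l.
Qed.

Lemma jensen_symmetric_pair n (p : 'I_n -> W) (g sigma : 'I_n -> R) :
  (forall k, D (p k)) -> (forall k, 0 <= g k) -> \sum_(k < n) g k = 1 ->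
  (forall k, -1 <= sigma k <= 1) -> \sum_(k < n) g k * sigma k = 0 ->
  let xp := \sum_(k < n) (g k * (1 + sigma k)) *: p k in
  let xm := \sum_(k < n) (g k * (1 - sigma k)) *: p k in
  [/\ D xp, D xm, 2^-1 *: (xp + xm) = \sum_(k < n) g k *: p k
    & (F xp + F xm) / 2 <= \sum_(k < n) g k * F (p k)].
Proof.
move=> Dp g_ge0 g_sum sigma_bd sigma_sum xp xm.
have [Dxp Fxp] : D xp /\ F xp <= \sum_k g k * (1 + sigma k) * F (p k).
  apply: jensen => // [k|]; first by rewrite mulr_ge0 //; have := sigma_bd k; lra.
  under eq_bigr do rewrite mulrDr mulr1.
  by rewrite big_split /= g_sum sigma_sum addr0.
have [Dxm Fxm] : D xm /\ F xm <= \sum_k g k * (1 - sigma k) * F (p k).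
  apply: jensen => // [k|]; first by rewrite mulr_ge0 //; have := sigma_bd k; lra.
  by under eq_bigr do rewrite mulrBr mulr1; rewrite sumrB g_sum sigma_sum subr0.
split => //.
  rewrite -big_split scaler_sumr; apply: eq_bigr => k _ /=.
  by rewrite -scalerDl scalerA; congr (_ *: _); field.
have -> : \sum_k g k * F (p k) = (\sum_k g k * (1 + sigma k) * F (p k) +
                                   \sum_k g k * (1 - sigma k) * F (p k)) / 2.
  by rewrite -big_split mulr_suml; apply: eq_bigr => k _ /=; field.
lra.
Qed.

End ConvexCombinations.

Lemma sum_abs_centered (R : realDomainType) n (g y : 'I_n -> R) :
  \sum_(k < n) g k * y k = 0 ->
  \sum_(k < n) g k * `|y k| = 2 * \sum_(k < n | 0 <= y k) g k * y k.
Proof.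
pose P k := 0 <= y k.
rewrite (bigID P) /= => sum0; rewrite (bigID P) /=.
have -> : \sum_(k < n | P k) g k * `|y k| = \sum_(k < n | P k) g k * y k.
  by apply: eq_bigr => k y_ge0; rewrite ger0_norm.
have -> : \sum_(k < n | ~~ P k) g k * `|y k| = - \sum_(k < n | ~~ P k) g k * y k.
  rewrite -sumrN; apply: eq_bigr => k; rewrite /P -ltNge => y_lt0.
  by rewrite ltr0_norm // mulrN.
lra.
Qed.

Lemma mean_abs_deviation_split (R : realFieldType) n (g x : 'I_n -> R) :
  (forall k, 0 <= g k) -> \sum_(k < n) g k = 1 ->
  let m := \sum_(k < n) g k * x k in
  exists sigma : 'I_n -> R,
  [/\ forall k, -1 <= sigma k <= 1, \sum_(k < n) g k * sigma k = 0
    & \sum_(k < n) g k * sigma k * x k = (\sum_(k < n) g k * `|x k - m|) / 2].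
Proof.
move=> g_ge0 g_sum m; set P := fun k => 0 <= x k - m.
set a := \sum_(j < n | P j) g j.
pose sigma k := (if P k then 1 else 0) - a; exists sigma.
have restrict (z : 'I_n -> R) :
    \sum_(k < n) g k * (if P k then z k else 0) = \sum_(k < n | P k) g k * z k.
  by rewrite [RHS]big_mkcond; apply: eq_bigr => k _; case: (P k); rewrite ?mulr0.
have centered (z : 'I_n -> R) (c : R) :
    \sum_(k < n) g k * (z k - c) = \sum_(k < n) g k * z k - c.
  by under eq_bigr do rewrite mulrBr; rewrite sumrB -mulr_suml g_sum mul1r.
have a01 : 0 <= a <= 1.
  rewrite sumr_ge0 //= -g_sum [leRHS](bigID P) /= lerDl.
  exact: sumr_ge0.
have sigma_sum : \sum_(k < n) g k * sigma k = 0.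
  rewrite centered (restrict (fun=> 1)).
  by under eq_bigr do rewrite mulr1; rewrite subrr.
split => // [k|]; first by rewrite /sigma; case: ifP; lra.
have x_centered : \sum_(k < n) g k * (x k - m) = 0 by rewrite centered subrr.
have -> : \sum_(k < n) g k * sigma k * x k =
    \sum_(k < n) g k * sigma k * (x k - m).
  under [RHS]eq_bigr do rewrite mulrBr.
  by rewrite sumrB -mulr_suml sigma_sum mul0r subr0.
have -> : \sum_(k < n) g k * sigma k * (x k - m) =
    \sum_(k < n) g k * (if P k then x k - m else 0) -
    a * \sum_(k < n) g k * (x k - m).
  rewrite mulr_sumr -sumrB; apply: eq_bigr => k _.
  by rewrite /sigma /P; case: ifP => _; ring.
by rewrite restrict x_centered mulr0 subr0 (sum_abs_centered x_centered); field.
Qed.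

Lemma sum_pairE (U1 U2 : nmodType) (I : Type) (r : seq I) (P : pred I)
    (z : I -> U1 * U2) :
  \sum_(i <- r | P i) z i =
  (\sum_(i <- r | P i) (z i).1, \sum_(i <- r | P i) (z i).2).
Proof. by elim/big_rec3: _ => //= i y a b _ ->; case: (z i). Qed.

Section ProductSpace.
Variables (R : realType) (V : lmodType R) (D : set (R * V)) (B c : R -> V -> R).
Hypothesis D_convex : convex_RV D.
Hypothesis B_continuous : fd_affine_continuous D B.
Hypothesis B_midpoint_gap : forall (f fp fm : R) (N Np Nm : V),
  D (f, N) -> D (fp, Np) -> D (fm, Nm) ->
  f = (fp + fm) / 2 -> N = 2^-1 *: (Np + Nm) ->
  c f N * (fp - f) ^+ 2 <= (B fp Np + B fm Nm) / 2 - B f N /\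
  0 <= c f N * (fp - f) ^+ 2.

Lemma convex_RV_segment (x y : R * V) (t : R) : D x -> D y -> 0 <= t <= 1 ->
  D (t *: x + (1 - t) *: y).
Proof. by move=> Dx Dy t01; exact (D_convex Dx Dy t01). Qed.

Lemma fd_affine_continuous_segment (x y : R * V) : D x -> D y ->
  {within `[0, 1], continuous (fun t => uncurry B (t *: x + (1 - t) *: y))}.
Proof.
move=> Dx Dy.
pose p (i : 'I_2) := if i == ord0 then x else y.
pose e (b : bool) : 'rV[R]_2 := \row_(j < 2) ((j == ord0) == b)%:R.
pose h t := t *: e true + (1 - t) *: e false.
have acomb_h t : acomb p (h t) = t *: x + (1 - t) *: y.
  rewrite /acomb !big_ord_recl !big_ord0 /h /e /p /= !mxE /=.
  by rewrite !mulr1 !mulr0 !addr0 !add0r.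
have -> : (fun t => uncurry B (t *: x + (1 - t) *: y)) =
    (fun s => B (acomb p s).1 (acomb p s).2) \o h.
  by apply: funext => t; rewrite /comp acomb_h.
apply: (within_continuous_comp_within _ _ (B_continuous (p := p))).
- move=> t; rewrite /= in_itv /= => t01; split.
    rewrite !big_ord_recl big_ord0 /h /e !mxE /=.
    by rewrite !mulr1 !mulr0 !addr0 !add0r subrKC.
  by rewrite acomb_h; exact: convex_RV_segment.
- apply: continuous_subspaceT => t.
  apply: (@continuousD R 'rV[R]_2 R
    (fun s => s *: e true) (fun s => (1 - s) *: e false)).
    by apply: continuousZr_tmp; exact: cvg_id.
  by apply: continuousZr_tmp; exact: (cvgB (cvg_cst _) cvg_id).
Qed.

Lemma midpoint_gap_pair (X x y : R * V) :
  D X -> D x -> D y -> X = 2^-1 *: (x + y) ->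
  c X.1 X.2 * (x.1 - X.1) ^+ 2 <=
    (uncurry B x + uncurry B y) / 2 - uncurry B X /\
  0 <= c X.1 X.2 * (x.1 - X.1) ^+ 2.
Proof.
case: X x y => [f N] [fp Np] [fm Nm] DX Dx Dy [fE NE].
by apply: B_midpoint_gap => //; rewrite fE mulrC.
Qed.

Lemma uncurry_midpoint_convex (x y : R * V) : D x -> D y ->
  uncurry B (2^-1 *: (x + y)) <= (uncurry B x + uncurry B y) / 2.
Proof.
move=> Dx Dy.
have Dxy := convex_midpoint convex_RV_segment Dx Dy.
by have [] := midpoint_gap_pair Dxy Dx Dy erefl; lra.
Qed.

End ProductSpace.

Theorem lemma6p5 (R : realType) (V : lmodType R) (D : set (R * V))
  (B c : R -> V -> R) :
  convex_RV D ->
  fd_affine_continuous D B ->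
  (forall (f fp fm : R) (N Np Nm : V),
     D (f, N) -> D (fp, Np) -> D (fm, Nm) ->
     f = (fp + fm) / 2 -> N = 2^-1 *: (Np + Nm) ->
     c f N * (fp - f) ^+ 2 <= (B fp Np + B fm Nm) / 2 - B f N /\
     0 <= c f N * (fp - f) ^+ 2) ->
  forall (n : nat) (fk : 'I_n -> R) (Nk : 'I_n -> V) (g : 'I_n -> R),
    (forall k, D (fk k, Nk k)) ->
    (forall k, 0 <= g k) ->
    \sum_(k < n) g k = 1 ->
    let f := \sum_(k < n) g k * fk k in
    let N := \sum_(k < n) g k *: Nk k in
    4^-1 * c f N * (\sum_(k < n) g k * `|fk k - f|) ^+ 2
      <= - B f N + \sum_(k < n) g k * B (fk k) (Nk k).
Proof.
move=> cvx cont Bmid n fk Nk g Dk g_ge0 g_sum; cbv zeta.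
set f := \sum_(k < n) g k * fk k; set N := \sum_(k < n) g k *: Nk k.
have [sigma [sigma_bd sigma_sum dev]] := mean_abs_deviation_split fk g_ge0 g_sum.
have [] := jensen_symmetric_pair (convex_RV_segment cvx)
  (fd_affine_continuous_segment cvx cont) (uncurry_midpoint_convex cvx Bmid)
  (p := fun k => (fk k, Nk k)) Dk g_ge0 g_sum sigma_bd sigma_sum.
set xp := \sum_(k < n) _ *: _; set xm := \sum_(k < n) _ *: _.
rewrite sum_pairE => Dxp Dxm mid avg.
have [+ _] := midpoint_gap_pair Bmid
  (convex_midpoint (convex_RV_segment cvx) Dxp Dxm) Dxp Dxm erefl.
rewrite mid /=.
have -> : xp.1 - f = (\sum_(k < n) g k * `|fk k - f|) / 2.
  rewrite -dev /xp sum_pairE /= -sumrB; apply: eq_bigr => k _ /=.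
  by rewrite -[_ *: fk k]/(_ * fk k); ring.
have avgB : (uncurry B xp + uncurry B xm) / 2 <=
  \sum_(k < n) g k * B (fk k) (Nk k) := avg.
have -> a : c f N * (a / 2) ^+ 2 = 4^-1 * c f N * a ^+ 2 by field.
lra.
Qed.
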